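(* Let $n\ge3$. For each integer $k\ge1$ let \[ S^{n-1}_k=\{x\in\mathbb{R}^n:\|x-c_k\|=r_k\},\qquad r_k=\tfrac1k,\quad c_k=\tfrac1k e_1=\left(\tfrac1k,0,\dots,0\right), \] and let $E_n=\bigcup_{k=1}^\infty S^{n-1}_k$. If $f\in C^\infty(\mathbb{R}^n)$ vanishes on $E_n$, then $f$ is flat at the origin: $D^\alpha f(0)=0$ for all multi-indices $\alpha$.
   Context: $\|\cdot\|$ is the Euclidean norm on $\mathbb{R}^n$ and $e_1$ is the first standard basis vector. *)

From HB Require Import structures.
From mathcomp Require Import all_boot all_order all_algebra.
From mathcomp Require Import all_classical all_reals all_analysis.
Set Implicit Arguments. Unset Strict Implicit. Unset Printing Implicit Defensive.
Import Order.TTheory GRing.Theory Num.Theory.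
Import numFieldNormedType.Exports.
Local Open Scope ring_scope.

Definition basis_vec (R : realType) (n : nat) (i : 'I_n) : 'rV[R]_n :=
  \row_j (if j == i then 1 else 0).

(* Iterated partial derivative D_{i_1} D_{i_2} ... D_{i_m} f for s = [:: i_1; ...; i_m]. *)
Definition iter_partial (R : realType) (n : nat) (s : seq 'I_n)
    (f : 'rV[R]_n -> R) : 'rV[R]_n -> R :=
  foldr (fun i g => fun x => 'D_(basis_vec R i) g x) f s.

Definition smooth (R : realType) (n : nat) (f : 'rV[R]_n -> R) : Prop :=
  forall (s : seq 'I_n) (x : 'rV[R]_n), differentiable (iter_partial s f) x.

Definition eucl_norm2 (R : realType) (n : nat) (x : 'rV[R]_n) : R :=
  \sum_(i < n) (x ord0 i) ^+ 2.

Definition center (R : realType) (n : nat) (k : nat) : 'rV[R]_n :=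
  \row_i (if val i == 0%N then k%:R^-1 else 0).

Definition sphere_k (R : realType) (n : nat) (k : nat) : set 'rV[R]_n :=
  [set x | Num.sqrt (eucl_norm2 (x - @center R n k)) = k%:R^-1].

Definition E_set (R : realType) (n : nat) : set 'rV[R]_n :=
  [set x | exists k : nat, (1 <= k)%N /\ @sphere_k R n k x].

From Pilot Require Import Defs.
From HB Require Import structures.
From mathcomp Require Import all_boot all_order all_algebra.
From mathcomp Require Import all_classical all_reals all_analysis.
From mathcomp Require Import ring lra.
Set Implicit Arguments. Unset Strict Implicit. Unset Printing Implicit Defensive.
Import Order.TTheory GRing.Theory Num.Theory.
Import numFieldNormedType.Exports.
Local Open Scope ring_scope.
Local Open Scope classical_set_scope.

(* A ray [t *: w] from the origin with [w_1 > 0] meets the sphere [S_k] at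
   [t = 2 w_1 / (k |w|^2)], so [f] has zeros on the ray accumulating at [0]; by
   Rolle's theorem so has every derivative [D_w^m f] along the ray, hence
   [D_w^m f(0) = 0] for every [w] in the open half-space [w_1 > 0].  This
   property passes from [g] to [D_u g]: by Schwarz's theorem,
   [(m+1) D_u D_w^m g(0)] is the coefficient of [e] in the polynomial
   [e |-> D_(w + e u)^(m+1) g(0)], which vanishes for small [e > 0]. *)

Lemma poly_eq0_on_itv (R : realFieldType) (p : {poly R}) (r : R) : 0 < r ->
  (forall e, 0 < e < r -> p.[e] = 0) -> p = 0.
Proof.
move=> r0 p0.
apply: (roots_geq_poly_eq0 (rs := [seq r / i.+2%:R | i <- iota 0 (size p)])).
- apply/allP => _ /mapP[i _ ->]; apply/eqP/p0.
  by rewrite divr_gt0 ?ltr0n //= ltr_pdivrMr ?ltr0n // ltr_pMr // ltr1n.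
- rewrite map_inj_uniq ?iota_uniq // => i j /(mulfI (lt0r_neq0 r0))/invr_inj/eqP.
  by rewrite eqr_nat => /eqP[].
- by rewrite size_map size_iota.
Qed.

Section RightZeros.
Variable R : realType.
Implicit Types (phi : R -> R) (a : R).

Definition right_zeros phi a :=
  forall d, 0 < d -> exists2 t, a < t < a + d & phi t = 0.

Lemma right_zeros_derive phi a : (forall t, derivable phi t 1) ->
  right_zeros phi a -> right_zeros phi^`() a.
Proof.
move=> dphi zphi d d0.
have [t1 /andP[at1 t1d] z1] := zphi d d0.
have [t2 /andP[at2 t21] z2] : exists2 t2, a < t2 < t1 & phi t2 = 0.
  by rewrite -[t1](subrKC a); apply: zphi; rewrite subr_gt0.
have cphi : {within `[t2, t1], continuous phi}.
  by apply: derivable_within_continuous => t _; exact: dphi.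
have [c] := Rolle t21 (fun t _ => dphi t) cphi (etrans z2 (esym z1)).
rewrite in_itv /= => /andP[t2c ct1] [_ dc].
by exists c; rewrite ?derive1E // (lt_trans at2 t2c) (lt_trans ct1 t1d).
Qed.

Lemma right_zeros_at phi a : {for a, continuous phi} -> right_zeros phi a ->
  phi a = 0.
Proof.
move=> cphi zphi; have [//|phia] := eqVneq (phi a) 0.
have phia0 : 0 < `|phi a| by rewrite normr_gt0.
have /nbhs_normP[d d0 near_a] : \forall t \near a, `|phi a - phi t| < `|phi a|.
  exact: (cvgr_dist_lt _ _ cphi _ phia0).
have [t /andP[ta td] zt] := zphi d d0.
have : `|phi a - phi t| < `|phi a|.
  by apply: near_a; rewrite /ball_ /= distrC gtr0_norm ?subr_gt0 // ltrBlDl.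
by rewrite zt subr0 ltxx.
Qed.

End RightZeros.

Section DirectionalDerivatives.
Variables (R : realType) (V : normedModType R).
Implicit Types (g : V -> R) (u v w x y : V).

Definition iter_derive w m g := iter m (fun h => 'D_w h) g.

Lemma derive_dirDZ g v v' (c : R) x : differentiable g x ->
  'D_(v + c *: v') g x = 'D_v g x + c * 'D_v' g x.
Proof. by move=> dg; rewrite !deriveE // linearD linearZ. Qed.

Lemma is_derive_line g y w (t : R) : derivable g (y + t *: w) w ->
  is_derive t 1 (fun s : R => g (y + s *: w)) ('D_w g (y + t *: w)).
Proof.
move=> dg.
have E : (fun h : R => h^-1 *: ((fun s => g (y + s *: w)) (h *: 1 + t)
                                - g (y + t *: w))) =
         (fun h : R => h^-1 *: (g (h *: w + (y + t *: w)) - g (y + t *: w))).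
  by apply/funext => h; rewrite scalerDl [h *: 1]mulr1 addrCA addrA.
by split; rewrite /derivable /derive /= E.
Qed.

Lemma second_difference_mvt g u w x (t : R) :
  (forall y, derivable g y u) -> (forall y, derivable ('D_u g) y w) -> 0 < t ->
  exists2 y, `|y - x| <= t * (`|u| + `|w|) &
    g (x + t *: u + t *: w) - g (x + t *: u) - g (x + t *: w) + g x
      = t * t * 'D_w ('D_u g) y.
Proof.
move=> dg dDg t0.
pose phi s := g (x + t *: w + s *: u) - g (x + s *: u).
pose dphi s := 'D_u g (x + t *: w + s *: u) - 'D_u g (x + s *: u).
have phi' (s : R) : is_derive s 1 phi (dphi s).
  by have := is_deriveB (is_derive_line (y := x + t *: w) (t := s) (dg _))
                        (is_derive_line (y := x) (t := s) (dg _)).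
have cphi : {within `[0, t], continuous phi}.
  by apply: derivable_within_continuous => s _; case: (phi' s).
have [s s0t phiE] := MVT t0 (fun s _ => phi' s) cphi.
pose psi r := 'D_u g (x + s *: u + r *: w).
have psi' (r : R) : is_derive r 1 psi ('D_w ('D_u g) (x + s *: u + r *: w)).
  exact: is_derive_line.
have cpsi : {within `[0, t], continuous psi}.
  by apply: derivable_within_continuous => r _; case: (psi' r).
have [r r0t psiE] := MVT t0 (fun r _ => psi' r) cpsi.
exists (x + s *: u + r *: w).
  rewrite addrAC (addrAC x) subrr add0r.
  move: s0t r0t; rewrite !in_itv /= => /andP[s0 st] /andP[r0 rt].
  apply: (le_trans (ler_normD _ _)); rewrite !normrZ !gtr0_norm // mulrDr.
  by apply: lerD; apply: ler_wpM2r; rewrite ?normr_ge0 ?ltW.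
have -> : g (x + t *: u + t *: w) - g (x + t *: u) - g (x + t *: w) + g x
    = phi t - phi 0.
  by rewrite /phi !scale0r !addr0 (addrAC x (t *: w)); ring.
have dphi_psi : dphi s = psi t - psi 0.
  by rewrite /dphi /psi scale0r addr0 (addrAC x (t *: w)).
by rewrite phiE dphi_psi psiE !subr0 -mulrA mulrC.
Qed.

Lemma derive_mixedC g u w x :
  (forall y, derivable g y u) -> (forall y, derivable g y w) ->
  (forall y, derivable ('D_u g) y w) -> (forall y, derivable ('D_w g) y u) ->
  {for x, continuous ('D_w ('D_u g))} -> {for x, continuous ('D_u ('D_w g))} ->
  'D_w ('D_u g) x = 'D_u ('D_w g) x.
Proof.
move=> dgu dgw dguw dgwu cuw cwu.
apply/eqP; rewrite -subr_eq0 -normr_le0; apply/ler_addgt0Pr => e e0.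
rewrite add0r; have e20 : 0 < e / 2 by rewrite divr_gt0.
have near_uw := @cvgr_dist_lt _ _ _ (nbhs x) (nbhs_filter x) _ _ cuw _ e20.
have near_wu := @cvgr_dist_lt _ _ _ (nbhs x) (nbhs_filter x) _ _ cwu _ e20.
have [d d0 near_x] := (nbhs_normP x _).1 (filterI near_uw near_wu).
pose t := d / (`|u| + `|w| + 1).
have uw1 : 0 < `|u| + `|w| + 1 by rewrite ltr_wpDl // addr_ge0.
have t0 : 0 < t by rewrite divr_gt0.
have td : t * (`|u| + `|w|) < d.
  by rewrite /t mulrAC ltr_pdivrMr // ltr_pM2l // ltrDl.
have [y yx Ey] := second_difference_mvt x dgu dguw t0.
have [y' y'x Ey'] := second_difference_mvt x dgw dgwu t0.
have mixed_eq : 'D_w ('D_u g) y = 'D_u ('D_w g) y'.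
  apply: (mulfI (x := t * t)); first by rewrite mulf_neq0 // gt_eqF.
  by rewrite -Ey -Ey' (addrAC x (t *: w)); ring.
have xy : `|x - y| < d by rewrite distrC; exact: le_lt_trans yx td.
have xy' : `|x - y'| < d.
  by rewrite distrC; apply: le_lt_trans y'x _; rewrite addrC.
have [ha _] := near_x y xy.
have [_ hb] := near_x y' xy'.
rewrite -mixed_eq in hb.
move: ('D_w ('D_u g) x) ('D_u ('D_w g) x) ('D_w ('D_u g) y) ha hb.
move=> a b c ha hb.
rewrite [e]splitr; apply/ltW/(le_lt_trans (ler_distD c a b)).
by rewrite (distrC c); exact: ltrD.
Qed.

End DirectionalDerivatives.

Section Smooth.
Variables (R : realType) (n : nat).
Local Notation V := 'rV[R]_n.
Implicit Types (g h : V -> R) (u v w x y : V).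

Lemma basis_vecE (i : 'I_n) : basis_vec R i = 'e_i.
Proof. by apply/rowP => j; rewrite !mxE eqxx eq_sym; case: eqP. Qed.

Lemma derive_zero v x : 'D_v (0 : V -> R) x = 0.
Proof. exact: derive_cst. Qed.

Lemma iter_partial_cat s t g :
  iter_partial s (iter_partial t g) = iter_partial (s ++ t) g.
Proof. by rewrite /iter_partial foldr_cat. Qed.

Lemma smooth_iter_partial s g : smooth g -> smooth (iter_partial s g).
Proof. by move=> sg t x; rewrite iter_partial_cat; exact: sg. Qed.

Lemma smooth_differentiable g x : smooth g -> differentiable g x.
Proof. by move=> sg; exact: sg [::] x. Qed.

Lemma iter_partial_zero s : iter_partial s (0 : V -> R) = 0.
Proof.
by elim: s => //= i s IH; apply/funext => x; rewrite IH derive_zero.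
Qed.

Lemma iter_partialD s g h : smooth g -> smooth h ->
  iter_partial s (g + h) = iter_partial s g + iter_partial s h.
Proof.
move=> sg sh; elim: s => //= i s IH; apply/funext => x.
by rewrite IH deriveD //; apply: diff_derivable; [exact: sg | exact: sh].
Qed.

Lemma iter_partialZ s c g : smooth g ->
  iter_partial s (c \*: g) = c \*: iter_partial s g.
Proof.
move=> sg; elim: s => //= i s IH; apply/funext => x.
by rewrite IH deriveZ //; apply: diff_derivable; exact: sg.
Qed.

Lemma smooth0 : smooth (0 : V -> R).
Proof. by move=> s x; rewrite iter_partial_zero; exact: differentiable_cst. Qed.

Lemma smoothD g h : smooth g -> smooth h -> smooth (g + h).
Proof.
by move=> sg sh s x; rewrite iter_partialD //; exact: differentiableD.
Qed.

Lemma smoothZ c g : smooth g -> smooth (c \*: g).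
Proof.
by move=> sg s x; rewrite iter_partialZ //; exact: differentiableZ.
Qed.

Lemma smooth_sum (I : Type) (r : seq I) (P : pred I) (F : I -> V -> R) :
  (forall i, P i -> smooth (F i)) -> smooth (\sum_(i <- r | P i) F i).
Proof.
by move=> sF; elim/big_ind: _ => //; [exact: smooth0 | exact: smoothD].
Qed.

Lemma derive_row_sum g v x : differentiable g x ->
  'D_v g x = \sum_(i < n) v ord0 i * 'D_(basis_vec R i) g x.
Proof.
move=> dg; rewrite deriveE // {1}(row_sum_delta v) linear_sum.
by apply: eq_bigr => i _; rewrite linearZ /= basis_vecE deriveE.
Qed.

Lemma smooth_derive v g : smooth g -> smooth ('D_v g).
Proof.
move=> sg.
have -> : 'D_v g = \sum_(i < n) v ord0 i \*: 'D_(basis_vec R i) g.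
  apply/funext => x; rewrite fct_sumE derive_row_sum //.
  exact: smooth_differentiable.
apply: smooth_sum => i _; apply: smoothZ.
exact: (smooth_iter_partial [:: i]).
Qed.

Lemma smooth_iter_derive w m g : smooth g -> smooth (iter_derive w m g).
Proof. by move=> sg; elim: m => //= m IH; exact: smooth_derive. Qed.

Lemma derive_smoothC g u w x : smooth g -> 'D_w ('D_u g) x = 'D_u ('D_w g) x.
Proof.
move=> sg.
have dD h : smooth h -> forall y v, derivable h y v.
  by move=> sh y v; apply/diff_derivable/smooth_differentiable.
apply: (@derive_mixedC R _ g u w x) => [y|y|y|y||].
- exact: dD sg y u.
- exact: dD sg y w.
- exact: dD (smooth_derive u sg) y w.
- exact: dD (smooth_derive w sg) y u.
all: apply: differentiable_continuous; apply: smooth_differentiable.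
all: by do 2 apply: smooth_derive.
Qed.

Lemma iter_derive_deriveC g u w m : smooth g ->
  iter_derive w m ('D_u g) = 'D_u (iter_derive w m g).
Proof.
move=> sg; elim: m => //= m ->.
by apply/funext => x; exact: derive_smoothC u w x (smooth_iter_derive w m sg).
Qed.

End Smooth.

Section Expansion.
Variables (R : realType) (n : nat) (g : 'rV[R]_n -> R) (u w : 'rV[R]_n).
Hypothesis sg : smooth g.

(* The coefficient of [e ^+ j] in [D_(w + e u)^k g], computed from
   [D_(w + e u) = D_w + e D_u]. *)
Fixpoint expand_coef (k j : nat) {struct k} : 'rV[R]_n -> R :=
  if k is k'.+1 then fun x =>
    'D_w (expand_coef k' j) x
    + (if j is j'.+1 then 'D_u (expand_coef k' j') x else 0)
  else if j == 0%N then g else 0.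

Lemma smooth_expand_coef k j : smooth (expand_coef k j).
Proof.
elim: k j => [|k IH] [|j] /=; try exact: smooth0.
- exact: sg.
- exact (smoothD (smooth_derive w (IH 0%N)) (@smooth0 R n)).
- exact (smoothD (smooth_derive w (IH j.+1)) (smooth_derive u (IH j))).
Qed.

Lemma expand_coef_gt k j : (k < j)%N -> expand_coef k j = 0.
Proof.
elim: k j => [|k IH] [|j] //= kj; apply/funext => x.
by rewrite (IH j.+1 (ltnW kj)) (IH j kj) !derive_zero addr0.
Qed.

Lemma expand_coef0 k : expand_coef k 0 = iter_derive w k g.
Proof. by elim: k => //= k IH; apply/funext => x; rewrite IH addr0. Qed.

Lemma expand_coef1 k :
  expand_coef k.+1 1 = k.+1%:R \*: 'D_u (iter_derive w k g).
Proof.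
elim: k => [|k IH]; apply/funext => x.
  by rewrite /= derive_zero add0r scale1r.
have -> : expand_coef k.+2 1 x
    = 'D_w (expand_coef k.+1 1) x + 'D_u (expand_coef k.+1 0) x by [].
rewrite IH expand_coef0 deriveZ; last first.
  exact/diff_derivable/smooth_differentiable/smooth_derive/smooth_iter_derive.
rewrite (derive_smoothC u w x (smooth_iter_derive w k sg)) [in RHS]mulrSr.
by rewrite /= scalerDl scale1r.
Qed.

Lemma iter_derive_expand k (e : R) x :
  iter_derive (w + e *: u) k g x = \sum_(j < k.+1) e ^+ j * expand_coef k j x.
Proof.
elim: k x => [|k IH] x; first by rewrite big_ord1 expr0 mul1r.
have -> : iter_derive (w + e *: u) k.+1 g x
    = 'D_(w + e *: u) (iter_derive (w + e *: u) k g) x by [].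
have -> : iter_derive (w + e *: u) k g
    = \sum_(j < k.+1) e ^+ j \*: expand_coef k j.
  by apply/funext => y; rewrite IH fct_sumE.
have dC j v : derivable (expand_coef k j) x v.
  exact/diff_derivable/smooth_differentiable/smooth_expand_coef.
have dsum : differentiable (\sum_(j < k.+1) e ^+ j \*: expand_coef k j) x.
  apply/differentiable_sum => j; apply: differentiableZ.
  exact: smooth_differentiable (smooth_expand_coef k j).
have DZ v j :
    'D_v (e ^+ j \*: expand_coef k j) x = e ^+ j * 'D_v (expand_coef k j) x.
  by rewrite deriveZ.
rewrite derive_dirDZ // !derive_sum => [|j|j]; try exact: derivableZ.
rewrite (eq_bigr _ (fun (j : 'I_k.+1) _ => DZ w j)).
rewrite (eq_bigr _ (fun (j : 'I_k.+1) _ => DZ u j)).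
have coefS (j : 'I_k.+2) : e ^+ j * expand_coef k.+1 j x
    = e ^+ j * 'D_w (expand_coef k j) x
      + (if val j is j'.+1 then e ^+ j * 'D_u (expand_coef k j') x else 0).
  by case: j => -[|j] ? /=; rewrite ?addr0 ?mulrDr.
rewrite (eq_bigr _ (fun j _ => coefS j)) big_split /=.
rewrite [X in _ = X + _]big_ord_recr /= (expand_coef_gt (ltnSn k)) derive_zero.
rewrite mulr0 addr0 [X in _ = _ + X]big_ord_recl /= add0r mulr_sumr.
by congr (_ + _); apply: eq_bigr => j _; rewrite exprS mulrA.
Qed.

End Expansion.

Section HalfspaceFlat.
Variables (R : realType) (n : nat) (i : 'I_n) (x : 'rV[R]_n).
Implicit Types (f g : 'rV[R]_n -> R) (u w : 'rV[R]_n).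

Definition halfspace_flat g :=
  forall w, 0 < w ord0 i -> forall m, iter_derive w m g x = 0.

Lemma halfspace_flat_of_right_zeros f : smooth f ->
  (forall w, 0 < w ord0 i -> right_zeros (fun t => f (x + t *: w)) 0) ->
  halfspace_flat f.
Proof.
move=> sf zf w wi m.
pose phi k t := iter_derive w k f (x + t *: w).
have phi' k (t : R) : is_derive t 1 (phi k) (phi k.+1 t).
  apply: is_derive_line; apply: diff_derivable.
  exact: smooth_differentiable (smooth_iter_derive w k sf).
have : right_zeros (phi m) 0.
  elim: m => [|k IH]; first exact: zf.
  have -> : phi k.+1 = (phi k)^`().
    by apply/funext => t; rewrite derive1E; case: (phi' k t).
  by apply: right_zeros_derive IH => t; case: (phi' k t).
move/right_zeros_at; rewrite /phi scale0r addr0; apply.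
by apply/differentiable_continuous/derivable1_diffP; case: (phi' m 0).
Qed.

Lemma halfspace_flat_derive g u : smooth g -> halfspace_flat g ->
  halfspace_flat ('D_u g).
Proof.
move=> sg flat_g w wi m.
rewrite iter_derive_deriveC //.
pose r := w ord0 i / (1 + `|u ord0 i|).
have u1 : 0 < 1 + `|u ord0 i| by rewrite ltr_pwDl.
have r0 : 0 < r by rewrite divr_gt0.
have coefs0 : \poly_(j < m.+2) expand_coef g u w m.+1 j x = 0.
  apply: (poly_eq0_on_itv r0) => e /andP[e0 er].
  have wu : 0 < (w + e *: u) ord0 i.
    have ue : e * `|u ord0 i| < w ord0 i.
      apply: (le_lt_trans (y := r * `|u ord0 i|)).
        by rewrite ler_wpM2r // ltW.
      by rewrite /r mulrAC ltr_pdivrMr // ltr_pM2l // ltrDr.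
    have : - (e * u ord0 i) <= e * `|u ord0 i|.
      by rewrite -[e in e * `|_|]gtr0_norm // -normrM -normrN ler_norm.
    rewrite !mxE; lra.
  rewrite horner_poly -[RHS](flat_g _ wu m.+1) (iter_derive_expand u w sg).
  by apply: eq_bigr => j _; rewrite mulrC.
have : (\poly_(j < m.+2) expand_coef g u w m.+1 j x)`_1 = 0.
  by rewrite coefs0 coef0.
rewrite coef_poly (expand_coef1 u w sg) /= => /eqP.
by rewrite mulf_eq0 pnatr_eq0 => /eqP.
Qed.

End HalfspaceFlat.

Section RaysMeetSpheres.
Variables (R : realType) (n : nat) (w : 'rV[R]_n.+1).
Hypothesis w0 : 0 < w ord0 ord0.

Lemma eucl_norm2_gt0 : 0 < eucl_norm2 w.
Proof.
rewrite /eucl_norm2 big_ord_recl ltr_pwDl ?exprn_gt0 //.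
by apply: sumr_ge0 => i _; exact: sqr_ge0.
Qed.

Lemma sphere_k_ray k : (0 < k)%N ->
  sphere_k k ((2 * w ord0 ord0 / (k%:R * eucl_norm2 w)) *: w).
Proof.
move=> k0; set t := 2 * _ / _.
have k0R : 0 < k%:R :> R by rewrite ltr0n.
rewrite /sphere_k /=.
suff -> : eucl_norm2 (t *: w - @Defs.center R n.+1 k) = k%:R^-1 ^+ 2.
  by rewrite sqrtr_sqr ger0_norm // invr_ge0 ltW.
have N0 := eucl_norm2_gt0.
rewrite /eucl_norm2 big_ord_recl !mxE /=.
under eq_bigr do rewrite !mxE /= subr0 exprMn.
rewrite -mulr_sumr.
have -> : \sum_(i < n) w ord0 (lift ord0 i) ^+ 2 = eucl_norm2 w - w ord0 ord0 ^+ 2.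
  by rewrite /eucl_norm2 big_ord_recl addrAC subrr add0r.
rewrite /t; field.
by rewrite gt_eqF //= gt_eqF.
Qed.

Lemma ray_meets_E_set d : 0 < d -> exists2 t, 0 < t < d & E_set (t *: w).
Proof.
move=> d0; have N0 := eucl_norm2_gt0.
pose k := (Num.truncn (2 * w ord0 ord0 / (eucl_norm2 w * d))).+1.
have k0R : 0 < k%:R :> R by rewrite ltr0n.
have : 2 * w ord0 ord0 / (eucl_norm2 w * d) < k%:R by exact: truncnS_gt.
rewrite ltr_pdivrMr ?mulr_gt0 // => kd.
exists (2 * w ord0 ord0 / (k%:R * eucl_norm2 w)).
  rewrite divr_gt0 ?mulr_gt0 //= ltr_pdivrMr ?mulr_gt0 //.
  by rewrite [X in _ < X]mulrC -mulrA.
by exists k; split; last exact: sphere_k_ray.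
Qed.

End RaysMeetSpheres.

Theorem corollary1 (R : realType) (n : nat) (hn : (3 <= n)%N)
  (f : 'rV[R]_n -> R) (hf : smooth f)
  (hE : forall x, @E_set R n x -> f x = 0) :
  forall s : seq 'I_n, iter_partial s f 0 = 0.
Proof.
case: n hn f hf hE => [//|n] _ f hf hE s.
have flat_f : halfspace_flat ord0 0 f.
  apply: halfspace_flat_of_right_zeros => // w w0 d d0.
  have [t t0d Et] := ray_meets_E_set w0 d0.
  by exists t; rewrite ?add0r ?hE.
have : halfspace_flat ord0 0 (iter_partial s f).
  elim: s => [//|i s IH].
  exact: halfspace_flat_derive (smooth_iter_partial s hf) IH.
by move/(_ (basis_vec R ord0) _ 0%N); apply; rewrite mxE eqxx ltr01.
Qed.
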